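(* Consider a balanced mass action chemical reaction network with complex stoichiometric matrix $Z$ and complex-graph incidence matrix $B$, and let $x^*\in\mathbb{R}^m_+$ be a thermodynamic equilibrium. Assume the complex graph is connected. Then for any other thermodynamic equilibrium $x^{**}$ there exists a constant $d^{**}>0$ such that $\mathcal{K}(x^{**})=d^{**}\mathcal{K}(x^* )$ and $\mathrm{Exp}\big(Z^T\mathrm{Ln}(\tfrac{x}{x^{**}})\big)=\tfrac{1}{d^{**}}\mathrm{Exp}\big(Z^T\mathrm{Ln}(\tfrac{x}{x^{*}})\big)$ for all $x\in\mathbb{R}^m_+$. Furthermore, if the complex graph is not connected and has $\ell$ connected components (linkage classes), then for any other thermodynamic equilibrium $x^{**}$ there exist constants $d_p^{**}>0$, $p=1,\dots,\ell$, such that $\mathcal{K}_p(x^{**})=d_p^{**}\mathcal{K}_p(x^* )$ for $p=1,\dots,\ell$.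
   Context: Network: $m$ species with concentrations $x\in\mathbb{R}^m_+$, $c$ complexes, $r$ reactions. $Z$ ($m\times c$) has as $\rho$-th column the species composition of complex $\rho$. The complex graph has the complexes as vertices and, for each reaction $j$, an edge from its substrate complex $\mathcal{S}_j$ to its product complex $\mathcal{P}_j$; $B$ is its $c\times r$ incidence matrix ($-1$ at tail, $+1$ at head). Connectivity is in the undirected sense; the connected components are called linkage classes. Mass action rates: $v_j(x)=k_j^{\mathrm{forw}}\exp(Z_{\mathcal{S}_j}^T\mathrm{Ln}(x))-k_j^{\mathrm{rev}}\exp(Z_{\mathcal{P}_j}^T\mathrm{Ln}(x))$ with $k_j^{\mathrm{forw}},k_j^{\mathrm{rev}}\ge0$ not both zero, and dynamics $\dot x=ZBv(x)$. A thermodynamic equilibrium is $x^*\in\mathbb{R}^m_+$ with $v(x^* )=0$; the network is balanced if one exists. For a thermodynamic equilibrium $x^*$, the balanced reaction constants are $\kappa_j(x^* ):=k_j^{\mathrm{forw}}\exp(Z_{\mathcal{S}_j}^T\mathrm{Ln}(x^* ))=k_j^{\mathrm{rev}}\exp(Z_{\mathcal{P}_j}^T\mathrm{Ln}(x^* ))>0$ and $\mathcal{K}(x^* ):=\mathrm{diag}(\kappa_1(x^* ),\dots,\kappa_r(x^* ))$. When reactions are grouped by linkage class, $\mathcal{K}_p(x^* )$ denotes the diagonal block of $\mathcal{K}(x^* )$ belonging to the reactions of the $p$-th linkage class. $\mathrm{Ln},\mathrm{Exp}$ are componentwise logarithm/exponential and $x/x^*$ is the componentwise quotient. *)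

From HB Require Import structures.
From mathcomp Require Import all_boot all_order all_algebra.
From mathcomp Require Import all_classical all_reals all_analysis.
Set Implicit Arguments. Unset Strict Implicit. Unset Printing Implicit Defensive.
Import Order.TTheory GRing.Theory Num.Theory.
Local Open Scope ring_scope.

Section CRN.
Variable R : realType.

Definition Zmx (m c : nat) (Z : 'M[nat]_(m, c)) : 'M[R]_(m, c) :=
  map_mx (fun n : nat => n%:R) Z.

Definition Ln (n : nat) (x : 'cV[R]_n) : 'cV[R]_n := map_mx (@ln R) x.
Definition Exp (n : nat) (x : 'cV[R]_n) : 'cV[R]_n := map_mx (@expR R) x.
Definition vdiv (n : nat) (x y : 'cV[R]_n) : 'cV[R]_n := \col_i (x i 0 / y i 0).

Definition posv (n : nat) (x : 'cV[R]_n) : Prop := forall i, 0 < x i 0.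

Definition ZtLn (m c : nat) (Z : 'M[nat]_(m, c)) (x : 'cV[R]_m) : 'cV[R]_c :=
  (Zmx Z)^T *m Ln x.

(* mass action rate of reaction j; S j / P j are substrate / product complexes *)
Definition rate (m c r : nat) (Z : 'M[nat]_(m, c)) (S P : 'I_r -> 'I_c)
  (kf kr : 'I_r -> R) (j : 'I_r) (x : 'cV[R]_m) : R :=
  kf j * expR (ZtLn Z x (S j) 0) - kr j * expR (ZtLn Z x (P j) 0).

Definition thermo_eq (m c r : nat) (Z : 'M[nat]_(m, c)) (S P : 'I_r -> 'I_c)
  (kf kr : 'I_r -> R) (x : 'cV[R]_m) : Prop :=
  posv x /\ forall j, rate Z S P kf kr j x = 0.

Definition kappa (m c r : nat) (Z : 'M[nat]_(m, c)) (S : 'I_r -> 'I_c)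
  (kf : 'I_r -> R) (x : 'cV[R]_m) (j : 'I_r) : R :=
  kf j * expR (ZtLn Z x (S j) 0).

Definition Kmx (m c r : nat) (Z : 'M[nat]_(m, c)) (S : 'I_r -> 'I_c)
  (kf : 'I_r -> R) (x : 'cV[R]_m) : 'M[R]_r :=
  diag_mx (\row_j kappa Z S kf x j).

End CRN.

Definition cgraph (c r : nat) (S P : 'I_r -> 'I_c) : rel 'I_c :=
  fun a b => [exists j, ((S j == a) && (P j == b)) || ((S j == b) && (P j == a))].

Definition cg_connected (c r : nat) (S P : 'I_r -> 'I_c) : Prop :=
  forall a b : 'I_c, connect (cgraph S P) a b.

Definition same_linkage (c r : nat) (S P : 'I_r -> 'I_c) (a b : 'I_c) : Prop :=
  connect (cgraph S P) a b.

From HB Require Import structures.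
From mathcomp Require Import all_boot all_order all_algebra.
From mathcomp Require Import all_classical all_reals all_analysis.
Set Implicit Arguments. Unset Strict Implicit.
Import Order.TTheory GRing.Theory Num.Theory.
Local Open Scope ring_scope.

(* At a thermodynamic equilibrium x every reaction j is balanced,
   kf_j exp((Z^T Ln x)_{S j}) = kr_j exp((Z^T Ln x)_{P j}).  Dividing these
   identities for two equilibria x* and x** cancels the rate constants, so the
   ratio exp((Z^T Ln x** )_a - (Z^T Ln x* )_a) takes the same value at both ends
   of every edge, hence is constant on each linkage class.  This ratio, taken
   at a = S j, is exactly kappa_j(x** ) / kappa_j(x* ); on a connected graph it
   is one constant d, and then Z^T Ln(x/x** ) = Z^T Ln(x/x* ) - ln d. *)

Lemma connect_eq_fun (T : finType) (U : Type) (e : rel T) (f : T -> U) :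
  (forall x y, e x y -> f x = f y) -> forall x y, connect e x y -> f x = f y.
Proof.
move=> fe x y /connectP [p + ->]; elim: p x => [// | z p IHp] x /= /andP [exz pz].
by rewrite (fe _ _ exz); apply: IHp.
Qed.

Section Equilibria.
Variables (R : realType) (m c r : nat) (Z : 'M[nat]_(m, c)).
Variables (S P : 'I_r -> 'I_c) (kf kr : 'I_r -> R).

Lemma ZtLn_vdiv (x y : 'cV[R]_m) : posv x -> posv y ->
  forall a, ZtLn Z (vdiv x y) a 0 = ZtLn Z x a 0 - ZtLn Z y a 0.
Proof.
move=> x_gt0 y_gt0 a; rewrite /ZtLn !mxE -sumrB; apply: eq_bigr => i _.
rewrite /Ln !mxE lnM ?posrE ?invr_gt0 // lnV ?posrE //.
by rewrite mulrDr mulrN.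
Qed.

Lemma thermo_eq_balanced (x : 'cV[R]_m) j : thermo_eq Z S P kf kr x ->
  kf j * expR (ZtLn Z x (S j) 0) = kr j * expR (ZtLn Z x (P j) 0).
Proof. by case=> _ /(_ j) /eqP; rewrite subr_eq0 => /eqP. Qed.

Lemma thermo_eq_rate_neq0 (x : 'cV[R]_m) j :
  (kf j != 0 \/ kr j != 0) -> thermo_eq Z S P kf kr x -> kf j != 0 /\ kr j != 0.
Proof.
move=> kj_neq0 /(thermo_eq_balanced j) bal.
have expR_neq0 a : expR (ZtLn Z x a 0) != 0 by rewrite gt_eqF ?expR_gt0.
have kf_neq0 : kf j != 0.
  case: kj_neq0 => // kr_neq0; apply: contraNneq (mulf_neq0 kr_neq0 (expR_neq0 (P j))).
  by move=> kf0; rewrite -bal kf0 mul0r.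
split=> //; apply: contraNneq (mulf_neq0 kf_neq0 (expR_neq0 (S j))).
by move=> kr0; rewrite bal kr0 mul0r.
Qed.

Definition eq_ratio (xs xss : 'cV[R]_m) (a : 'I_c) : R :=
  expR (ZtLn Z xss a 0 - ZtLn Z xs a 0).

Lemma eq_ratio_gt0 xs xss a : 0 < eq_ratio xs xss a.
Proof. exact: expR_gt0. Qed.

Lemma kappa_eq_ratio xs xss j :
  kappa Z S kf xss j = eq_ratio xs xss (S j) * kappa Z S kf xs j.
Proof. by rewrite /kappa /eq_ratio mulrCA -expRD subrK. Qed.

Lemma Exp_ZtLn_vdiv (x xs xss : 'cV[R]_m) : posv x -> posv xs -> posv xss ->
  forall a, Exp (ZtLn Z (vdiv x xss)) a 0 =
            (eq_ratio xs xss a)^-1 * Exp (ZtLn Z (vdiv x xs)) a 0.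
Proof.
move=> x_gt0 xs_gt0 xss_gt0 a.
rewrite /Exp [LHS]mxE [in RHS]mxE !ZtLn_vdiv // /eq_ratio -expRN -expRD; congr expR.
by rewrite opprB [RHS]addrC addrA subrK.
Qed.

Section TwoEquilibria.
Hypothesis hk : forall j, kf j != 0 \/ kr j != 0.
Variables xs xss : 'cV[R]_m.
Hypotheses (hxs : thermo_eq Z S P kf kr xs) (hxss : thermo_eq Z S P kf kr xss).

Lemma eq_ratio_edge j : eq_ratio xs xss (S j) = eq_ratio xs xss (P j).
Proof.
have [kf_neq0 kr_neq0] := thermo_eq_rate_neq0 (hk j) hxs.
have exp_S x : thermo_eq Z S P kf kr x ->
    expR (ZtLn Z x (S j) 0) = kr j / kf j * expR (ZtLn Z x (P j) 0).
  move=> /(thermo_eq_balanced j) bal.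
  by rewrite -mulrA mulrCA -bal mulrA mulVf ?mul1r.
rewrite /eq_ratio !expRB (exp_S _ hxs) (exp_S _ hxss) invfM mulrACA mulfV ?mul1r //.
by rewrite mulf_neq0 ?invr_eq0.
Qed.

Lemma eq_ratio_linkage a b :
  same_linkage S P a b -> eq_ratio xs xss a = eq_ratio xs xss b.
Proof.
apply: connect_eq_fun => u v /existsP [j /orP [] /andP [/eqP <- /eqP <-]].
  exact: eq_ratio_edge.
by rewrite eq_ratio_edge.
Qed.

Lemma eq_ratio_connected : cg_connected S P ->
  exists2 d, 0 < d & forall a, eq_ratio xs xss a = d.
Proof.
move=> conn; case: (pickP (@predT 'I_c)) => [a0 _ | no_complex].
  by exists (eq_ratio xs xss a0) => [|a]; rewrite ?eq_ratio_gt0 ?(eq_ratio_linkage (conn a a0)).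
by exists 1 => // a; have := no_complex a.
Qed.

End TwoEquilibria.
End Equilibria.

Theorem proposition3 (R : realType) (m c r : nat) (Z : 'M[nat]_(m, c))
  (S P : 'I_r -> 'I_c) (kf kr : 'I_r -> R)
  (hSP : forall j, S j != P j)
  (hkf : forall j, 0 <= kf j) (hkr : forall j, 0 <= kr j)
  (hk : forall j, kf j != 0 \/ kr j != 0)
  (xs : 'cV[R]_m) (hxs : thermo_eq Z S P kf kr xs) :
  (cg_connected S P ->
    forall xss : 'cV[R]_m, thermo_eq Z S P kf kr xss ->
      exists d : R, 0 < d /\
        Kmx Z S kf xss = d *: Kmx Z S kf xs /\
        (forall x : 'cV[R]_m, posv x ->
           Exp (ZtLn Z (vdiv x xss)) = d^-1 *: Exp (ZtLn Z (vdiv x xs)))) /\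
  (~ cg_connected S P ->
    forall xss : 'cV[R]_m, thermo_eq Z S P kf kr xss ->
      exists d : 'I_r -> R,
        (forall j, 0 < d j) /\
        (forall j j', same_linkage S P (S j) (S j') -> d j = d j') /\
        (forall j, kappa Z S kf xss j = d j * kappa Z S kf xs j)).
Proof.
split=> [conn xss hxss | _ xss hxss].
  have [d d_gt0 ratio_d] := eq_ratio_connected hk hxs hxss conn.
  exists d; split=> //; split.
    apply/matrixP => i j; rewrite !mxE.
    by case: (i == j); rewrite /= ?mulr0 // (kappa_eq_ratio Z S kf xs) ratio_d.
  move=> x x_gt0; apply/matrixP => a b; rewrite (ord1 b) [RHS]mxE.
  by rewrite (Exp_ZtLn_vdiv Z x_gt0 hxs.1 hxss.1) ratio_d.
exists (fun j => eq_ratio Z xs xss (S j)); split=> [j|]; first exact: eq_ratio_gt0.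
split=> [j j' |j]; last exact: kappa_eq_ratio.
exact: (eq_ratio_linkage hk hxs hxss).
Qed.
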